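(* Let $m>2$ be an integer and, in formal (or analytic) coordinates $(\theta,x_1,\dots,x_{2n})$ on $(\mathbb{K}^{2n+1},O)$, let $\alpha=d(\theta^m-x_1\theta)+\gamma$, where $\gamma=\sum_{i=1}^{2n}g_i(x)\,dx_i$ has coefficients independent of $\theta$ and $d\gamma$ is a symplectic form in the variables $x_1,\dots,x_{2n}$. Let $X=f_0\,\partial/\partial\theta+\sum_{i=1}^{2n}f_i\,\partial/\partial x_i$ be a formal (or analytic) vector field with $\mathcal{L}_X\alpha=0$. Then $f_0=f_1=0$.
   Context: $\mathbb{K}=\mathbb{R}$ or $\mathbb{C}$. *)

From HB Require Import structures.
From mathcomp Require Import all_boot all_order all_algebra.
Set Implicit Arguments. Unset Strict Implicit. Unset Printing Implicit Defensive.
Import GRing.Theory.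
Local Open Scope ring_scope.

Section FPS.
Variable K : fieldType.
Variable N : nat.

Definition mi := {ffun 'I_N -> nat}.
Definition fps := mi -> K.

Definition mi_add (a b : mi) : mi := [ffun i => (a i + b i)%N].
Definition mi_unit (i : 'I_N) : mi := [ffun j => nat_of_bool (j == i)].
Definition mi_zero : mi := [ffun _ => 0%N].

Definition fps_zero : fps := fun _ => 0.
Definition fps_add (s t : fps) : fps := fun a => s a + t a.
Definition fps_opp (s : fps) : fps := fun a => - s a.
Definition fps_mul (s t : fps) : fps := fun a =>
  \sum_(b : {ffun 'I_N -> 'I_(\sum_i a i).+1} | [forall i, (b i <= a i)%N])
     s [ffun i => nat_of_ord (b i)] * t [ffun i => (a i - b i)%N].
Definition fps_monomial (a : mi) : fps := fun b => (b == a)%:R.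
Definition fps_deriv (i : 'I_N) (s : fps) : fps :=
  fun a => (a i).+1%:R * s (mi_add a (mi_unit i)).
Definition fps_at0 (s : fps) : K := s mi_zero.

(* 1-forms  sum_j w_j dz_j  and vector fields  sum_k X_k d/dz_k *)
Definition oneform := 'I_N -> fps.
Definition vfield := 'I_N -> fps.

Definition fps_d (h : fps) : oneform := fun j => fps_deriv j h.

Definition lie_oneform (X : vfield) (w : oneform) : oneform := fun j => fun a =>
  \sum_k (fps_mul (X k) (fps_deriv k (w j)) a + fps_mul (w k) (fps_deriv j (X k)) a).
End FPS.

(* Coordinates (theta, x_1, ..., x_2n) on K^(2n+1): theta is index ord0,
   x_(i+1) is index lift ord0 i for i : 'I_(2n). *)
Section Setting.
Variable K : fieldType.
Variable n : nat.
Local Notation N := (2 * n).+1.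

Definition theta_idx : 'I_N := ord0.
Definition x_idx (i : 'I_(2 * n)) : 'I_N := lift ord0 i.
Definition x1_idx : 'I_N := inord 1.

Definition gamma_form (g : 'I_(2 * n) -> fps K N) : oneform K N :=
  fun j => match unlift ord0 j with Some i => g i | None => @fps_zero K N end.

Definition h_fun (m : nat) : fps K N :=
  fps_add (@fps_monomial K N [ffun i => (m * mi_unit theta_idx i)%N])
          (fps_opp (@fps_monomial K N (mi_add (mi_unit theta_idx) (mi_unit x1_idx)))).

Definition alpha_form (m : nat) (g : 'I_(2 * n) -> fps K N) : oneform K N :=
  fun j => fps_add (fps_d (h_fun m) j) (gamma_form g j).

Definition dgamma_at0 (g : 'I_(2 * n) -> fps K N) : 'M[K]_(2 * n) :=
  \matrix_(i, j) fps_at0 (fps_add (fps_deriv (x_idx i) (g j))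
                                  (fps_opp (fps_deriv (x_idx j) (g i)))).

(* d gamma is a (formal) symplectic form in x: nondegenerate at the origin *)
Definition symplectic_dgamma (g : 'I_(2 * n) -> fps K N) : Prop :=
  \det (dgamma_at0 g) != 0.

Definition indep_theta (s : fps K N) : Prop :=
  forall a : mi N, a theta_idx != 0%N -> s a = 0.
End Setting.

(* Write H = i_X alpha.  Since d alpha = d gamma, Cartan's formula turns L_X alpha = 0
   into dH + i_X d gamma = 0.  The dtheta-component says dH/dtheta = 0.  On a monomial
   containing theta, the dx_j-components then say that the coefficients of f_1, ..., f_2n
   lie in the kernel of d gamma(0), up to products with coefficients of lower degree;
   nondegeneracy and induction on the degree make f_1, ..., f_2n independent of theta.
   The theta-dependent part of H is now f_0 (m theta^(m-1) - x_1) - theta f_1.  As m > 2,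
   its coefficient at theta^(m-1) z^c only sees f_0: it is m f_0(c) minus a coefficient
   of f_0 of lower x_1-degree, so f_0 = 0 by induction on the x_1-degree.  Then the
   coefficient at theta z^c, for c free of theta, is - f_1(c). *)

From HB Require Import structures.
From mathcomp Require Import all_boot all_order all_algebra.
From mathcomp Require Import ring zify.
From Stdlib Require Import FunctionalExtensionality.
Set Implicit Arguments. Unset Strict Implicit. Unset Printing Implicit Defensive.
Import GRing.Theory Num.Theory.
Local Open Scope ring_scope.

Ltac mi_lia :=
  repeat match goal with |- context [nat_of_bool (?x == ?y)] => case: (x == y) end;
  simpl; lia.

Section FormalSeries.
Variable K : fieldType.
Variable N : nat.
Local Notation mi := (mi N).
Local Notation fps := (fps K N).
Implicit Types (a b c : mi) (s t u : fps).

Definition mi_le a b : bool := [forall i, (a i <= b i)%N].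
Definition mi_sub a b : mi := [ffun i => (a i - b i)%N].
Definition mi_deg a : nat := (\sum_i a i)%N.
Definition mi_of_ord M (b : {ffun 'I_N -> 'I_M}) : mi := [ffun i => nat_of_ord (b i)].

(* The exponents b <= a, enumerated as in the definition of [fps_mul]. *)
Definition mi_below a : seq mi :=
  [seq mi_of_ord o | o <- enum [pred o : {ffun 'I_N -> 'I_(mi_deg a).+1}
                                 | mi_le (mi_of_ord o) a]].

Lemma mi_of_ord_inj M : injective (@mi_of_ord M).
Proof.
move=> b c /ffunP E; apply/ffunP=> i; apply/val_inj.
by have := E i; rewrite !ffunE.
Qed.

Lemma mi_deg_ge a i : (a i <= mi_deg a)%N.
Proof. by rewrite /mi_deg (bigD1 i) //= leq_addr. Qed.

Lemma uniq_mi_below a : uniq (mi_below a).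
Proof. by rewrite map_inj_uniq ?enum_uniq //; apply: mi_of_ord_inj. Qed.

Lemma mem_mi_below a c : (c \in mi_below a) = mi_le c a.
Proof.
apply/mapP/idP; first by case=> o; rewrite mem_enum => /= ? ->.
move=> /forallP le_ca.
have lt_c i : (c i < (mi_deg a).+1)%N by rewrite ltnS (leq_trans (le_ca i)) ?mi_deg_ge.
exists [ffun i => Ordinal (lt_c i)]; last by apply/ffunP=> i; rewrite /mi_of_ord !ffunE.
by rewrite mem_enum inE; apply/forallP=> i; rewrite /mi_of_ord !ffunE; apply: le_ca.
Qed.

Lemma perm_mi_below a (l : seq mi) (P : pred mi) :
  uniq l -> (forall c, (c \in l) = mi_le c a && P c) ->
  perm_eq l [seq c <- mi_below a | P c].
Proof.
move=> ul ml; apply: uniq_perm => //; first by rewrite filter_uniq ?uniq_mi_below.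
by move=> c; rewrite mem_filter ml mem_mi_below andbC.
Qed.

Lemma fps_mulE s t a : fps_mul s t a = \sum_(c <- mi_below a) s c * t (mi_sub a c).
Proof.
rewrite /fps_mul /mi_below big_map big_enum /=.
apply: eq_big => [b|b _]; first by apply: eq_forallb => i; rewrite ffunE.
by congr (_ * t _); apply/ffunP=> i; rewrite !ffunE.
Qed.

Lemma mi_le_refl a : mi_le a a.
Proof. exact/forallP. Qed.

Lemma mi_le_subl a c : mi_le (mi_sub a c) a.
Proof. by apply/forallP=> i; rewrite ffunE leq_subr. Qed.

Lemma mi_subKn a c : mi_le c a -> mi_sub a (mi_sub a c) = c.
Proof. by move/forallP=> le_ca; apply/ffunP=> i; rewrite !ffunE subKn. Qed.

Lemma mi_subnn a : mi_sub a a = mi_zero N.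
Proof. by apply/ffunP=> i; rewrite !ffunE subnn. Qed.

Lemma big_mi_below_sub a (F : mi -> K) :
  \sum_(c <- mi_below a) F c = \sum_(c <- mi_below a) F (mi_sub a c).
Proof.
rewrite -(big_map (mi_sub a) xpredT) -[in LHS](filter_predT (mi_below a)) /=.
apply/esym/perm_big/perm_mi_below => [|c].
  rewrite map_inj_in_uniq ?uniq_mi_below // => c d.
  by rewrite !mem_mi_below => le_ca le_da E; rewrite -(mi_subKn le_ca) E mi_subKn.
rewrite andbT; apply/mapP/idP => [[d _ ->]|le_ca]; first exact: mi_le_subl.
by exists (mi_sub a c); rewrite ?mem_mi_below ?mi_le_subl ?mi_subKn.
Qed.

Lemma fps_mulC s t a : fps_mul s t a = fps_mul t s a.
Proof.
rewrite !fps_mulE big_mi_below_sub big_seq [RHS]big_seq.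
by apply: eq_bigr => c; rewrite mem_mi_below => /mi_subKn ->; rewrite mulrC.
Qed.

Lemma fps_mul_eq0 s t a :
  (forall b, mi_le b a -> s b * t (mi_sub a b) = 0) -> fps_mul s t a = 0.
Proof.
by move=> H; rewrite fps_mulE big_seq big1 // => b; rewrite mem_mi_below; apply: H.
Qed.

Lemma fps_mul_diag s t a :
  (forall b, mi_le b a -> b != a -> s b * t (mi_sub a b) = 0) ->
  fps_mul s t a = s a * t (mi_zero N).
Proof.
move=> H; rewrite fps_mulE (bigD1_seq a) ?mem_mi_below ?mi_le_refl ?uniq_mi_below //=.
rewrite mi_subnn big_seq_cond big1 ?addr0 // => b /andP[].
by rewrite mem_mi_below; apply: H.
Qed.

Lemma fps_mul_monomiall s c0 a :
  fps_mul (fps_monomial K c0) s a = if mi_le c0 a then s (mi_sub a c0) else 0.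
Proof.
rewrite fps_mulE /fps_monomial; case: ifP => le_c0a.
  rewrite (bigD1_seq c0) ?mem_mi_below ?uniq_mi_below //= eqxx mul1r big1 ?addr0 //.
  by move=> c /negbTE ->; rewrite mul0r.
rewrite big_seq big1 // => c; rewrite mem_mi_below.
by case: eqP => [-> /[!le_c0a]|]; rewrite ?mul0r.
Qed.

Lemma fps_mul_monomialr s c0 a :
  fps_mul s (fps_monomial K c0) a = if mi_le c0 a then s (mi_sub a c0) else 0.
Proof. by rewrite fps_mulC fps_mul_monomiall. Qed.

Lemma fps_mulDr s t u a :
  fps_mul s (fun c => t c + u c) a = fps_mul s t a + fps_mul s u a.
Proof. by rewrite !fps_mulE -big_split; apply: eq_bigr => c _; rewrite mulrDr. Qed.

Lemma fps_mulNr s t a : fps_mul s (fun c => - t c) a = - fps_mul s t a.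
Proof. by rewrite !fps_mulE -sumrN; apply: eq_bigr => c _; rewrite mulrN. Qed.

Lemma fps_mulBr s t u a :
  fps_mul s (fun c => t c - u c) a = fps_mul s t a - fps_mul s u a.
Proof. by rewrite fps_mulDr fps_mulNr. Qed.

Lemma fps_mulZr s t k a : fps_mul s (fun c => k * t c) a = k * fps_mul s t a.
Proof. by rewrite !fps_mulE mulr_sumr; apply: eq_bigr => c _; rewrite mulrCA. Qed.

Lemma fps_mul_derivl s t i a :
  let a' := mi_add a (mi_unit i) in
  fps_mul (fps_deriv i s) t a = \sum_(c <- mi_below a') (c i)%:R * (s c * t (mi_sub a' c)).
Proof.
move=> a'; pose shift b := mi_add b (mi_unit i).
have shiftK : injective shift.
  by move=> b c /ffunP E; apply/ffunP=> j; have := E j; rewrite !ffunE; mi_lia.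
rewrite fps_mulE.
transitivity (\sum_(c <- map shift (mi_below a)) (c i)%:R * (s c * t (mi_sub a' c))).
  rewrite [RHS]big_map; apply: eq_bigr => b _; rewrite /fps_deriv mulrA !ffunE eqxx addn1.
  by congr (_ * _ * t _); apply/ffunP=> j; rewrite !ffunE; mi_lia.
rewrite (perm_big _ (@perm_mi_below a' _ (fun c => 0 < c i)%N _ _)).
- rewrite big_filter big_mkcond; apply: eq_bigr => c _.
  by case: posnP => [->|]; rewrite ?mul0r.
- by rewrite map_inj_uniq ?uniq_mi_below.
move=> c; apply/mapP/idP => [[b]|/andP[/forallP le_ca' c_i]].
  rewrite mem_mi_below => /forallP le_ba ->; rewrite !ffunE eqxx addn1 andbT.
  by apply/forallP => j; have := le_ba j; rewrite !ffunE; mi_lia.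
exists (mi_sub c (mi_unit i)).
  rewrite mem_mi_below; apply/forallP=> j; have := le_ca' j.
  by rewrite !ffunE; case: (j == i) => /=; mi_lia.
by apply/ffunP=> j; rewrite !ffunE; case: eqP => [->|] /=; mi_lia.
Qed.

Lemma fps_deriv_mul s t i a :
  fps_deriv i (fps_mul s t) a = fps_mul (fps_deriv i s) t a + fps_mul s (fps_deriv i t) a.
Proof.
rewrite [fps_mul s _ a]fps_mulC !fps_mul_derivl /= [X in _ + X]big_mi_below_sub.
rewrite -big_split /= /fps_deriv fps_mulE mulr_sumr big_seq [RHS]big_seq.
apply: eq_bigr => c; rewrite mem_mi_below => le_ca.
rewrite mi_subKn // [t _ * _]mulrC -mulrDl -natrD; congr (_%:R * _).
by move/forallP: le_ca => /(_ i); rewrite !ffunE eqxx; mi_lia.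
Qed.

Lemma fps_derivC s i j a : fps_deriv i (fps_deriv j s) a = fps_deriv j (fps_deriv i s) a.
Proof.
rewrite /fps_deriv !ffunE; have [->//|ne_ij] := eqVneq i j.
rewrite !addn0 mulrCA; congr (_ * (_ * s _)).
by apply/ffunP=> k; rewrite !ffunE; mi_lia.
Qed.

Lemma mi_deg_lt a b : mi_le b a -> b != a -> (mi_deg b < mi_deg a)%N.
Proof.
move=> /forallP le_ba ne_ba; have [i ne_i|eq_ba] := pickP (fun i => b i != a i); last first.
  by case/eqP: ne_ba; apply/ffunP=> i; apply/eqP/negbFE/eq_ba.
rewrite /mi_deg (bigD1 i) //= [X in (_ < X)%N](bigD1 i) //= -addSn.
by rewrite leq_add ?leq_sum // ltn_neqAle ne_i le_ba.
Qed.

Definition free_of (i : 'I_N) s := forall a, a i != 0%N -> s a = 0.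

Lemma free_of_deriv i k s : free_of i s -> free_of i (fps_deriv k s).
Proof. by move=> s_free a a_i; rewrite /fps_deriv s_free ?mulr0 // ffunE; mi_lia. Qed.

Lemma deriv_free_of i s a : free_of i s -> fps_deriv i s a = 0.
Proof. by move=> s_free; rewrite /fps_deriv s_free ?mulr0 // !ffunE eqxx addn1. Qed.

Lemma fps_mul_free_of i s t : free_of i s -> free_of i t -> free_of i (fps_mul s t).
Proof.
move=> s_free t_free a a_i; apply: fps_mul_eq0 => b _.
have [b_i|b_i] := eqVneq (b i) 0%N; last by rewrite s_free ?mul0r.
by rewrite t_free ?mulr0 // ffunE b_i subn0.
Qed.

Definition contraction (X : vfield K N) (w : oneform K N) : fps :=
  fun a => \sum_k fps_mul (X k) (w k) a.

(* d w = sum_(k < j) dform w k j dz_k /\ dz_j *)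
Definition dform (w : oneform K N) (k j : 'I_N) : fps :=
  fun a => fps_deriv k (w j) a - fps_deriv j (w k) a.

Lemma dformN w k j a : dform w j k a = - dform w k j a.
Proof. by rewrite /dform opprB. Qed.

Lemma dform_dD h (w : oneform K N) k j a :
  dform (fun l => fps_add (fps_d h l) (w l)) k j a = dform w k j a.
Proof.
rewrite /dform /fps_d /fps_add {1 3}/fps_deriv !mulrDr.
have := fps_derivC h k j a; rewrite /fps_deriv => ->; ring.
Qed.

Lemma lie_oneformE X w j a :
  lie_oneform X w j a =
  fps_deriv j (contraction X w) a + \sum_k fps_mul (X k) (dform w k j) a.
Proof.
have -> : fps_deriv j (contraction X w) a = \sum_k fps_deriv j (fps_mul (X k) (w k)) a.
  by rewrite /fps_deriv /contraction mulr_sumr.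
rewrite -big_split /=; apply: eq_bigr => k _.
by rewrite fps_deriv_mul fps_mulBr (fps_mulC (w k)); ring.
Qed.

End FormalSeries.

Lemma free_of_deriv_eq0 (K : numFieldType) N i (s : fps K N) :
  (forall a, fps_deriv i s a = 0) -> free_of i s.
Proof.
move=> ds a a_i; have := ds (mi_sub a (mi_unit i)); rewrite /fps_deriv.
have -> : mi_add (mi_sub a (mi_unit i)) (mi_unit i) = a.
  by apply/ffunP=> j; rewrite !ffunE; case: eqP => [->|] /=; mi_lia.
by move/eqP; rewrite mulf_eq0 pnatr_eq0 => /eqP.
Qed.

Section Elimination.
Variables (K : numFieldType) (N : nat).
Variables (X : vfield K N.+1) (w : oneform K N.+1).
Hypothesis lie_eq0 : forall j a, lie_oneform X w j a = 0.
Hypothesis dform_0 : forall k a, dform w k ord0 a = 0.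
Hypothesis dform_free : forall k j, free_of ord0 (dform w k j).

Lemma contraction_free_of : free_of ord0 (contraction X w).
Proof.
apply: free_of_deriv_eq0 => a; have := lie_eq0 ord0 a.
rewrite lie_oneformE big1 ?addr0 // => k _.
by apply: fps_mul_eq0 => b _; rewrite dform_0 mulr0.
Qed.

Lemma vfield_lift_free_of :
  \det (\matrix_(i, j) fps_at0 (dform w (lift ord0 i) (lift ord0 j))) != 0 ->
  forall i, free_of ord0 (X (lift ord0 i)).
Proof.
set M := \matrix_(i, j) _ => det_neq0.
suff free_coef d a : mi_deg a = d -> a ord0 != 0%N -> forall i, X (lift ord0 i) a = 0.
  by move=> i a a0; apply: free_coef erefl a0 i.
elim/ltn_ind: d a => d IH a deg_a a0.
pose v := \row_i X (lift ord0 i) a.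
have v_ker : v *m M = 0.
  apply/rowP => j; rewrite !mxE; have := lie_eq0 (lift ord0 j) a.
  rewrite lie_oneformE (free_of_deriv _ contraction_free_of) // add0r big_ord_recl.
  rewrite (@fps_mul_eq0 _ _ (X ord0)) ?add0r => [E|b _]; last first.
    by rewrite dformN dform_0 oppr0 mulr0.
  rewrite -[RHS]E; apply: eq_bigr => i _; rewrite !mxE fps_mul_diag // => b le_ba ne_ba.
  have [b0|b0] := eqVneq (b ord0) 0%N.
    by rewrite dform_free ?mulr0 // ffunE b0 subn0.
  by rewrite (IH (mi_deg b)) ?mul0r // -deg_a mi_deg_lt.
have M_unit : M \in unitmx by rewrite unitmxE unitfE.
have v0 : v = 0 by rewrite -(mulmxK M_unit v) v_ker mul0mx.
by move=> i; have /rowP/(_ i) := v0; rewrite !mxE.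
Qed.

End Elimination.

Section NormalForm.
Variables (K : numFieldType) (n m : nat) (g : 'I_(2 * n) -> fps K (2 * n).+1).
Hypothesis n_gt0 : (0 < n)%N.
Hypothesis g_free : forall i, indep_theta (g i).
Local Notation th := (theta_idx n).
Local Notation x1 := (x1_idx n).
Local Notation alpha := (alpha_form m g).
Local Notation monomial := (fps_monomial K).

Lemma gamma_form_theta : gamma_form g th = @fps_zero K _.
Proof. by rewrite /gamma_form unlift_none. Qed.

Lemma gamma_form_lift i : gamma_form g (x_idx i) = g i.
Proof. by rewrite /gamma_form /x_idx liftK. Qed.

Lemma free_of_gamma_form k : free_of th (gamma_form g k).
Proof. by rewrite /gamma_form; case: unliftP => [i _|_] //; apply: g_free. Qed.

Lemma dform_alpha k j a : dform alpha k j a = dform (gamma_form g) k j a.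
Proof. exact: dform_dD. Qed.

Lemma dform_alpha_theta k a : dform alpha k th a = 0.
Proof.
rewrite dform_alpha /dform gamma_form_theta (deriv_free_of _ (free_of_gamma_form k)).
by rewrite /fps_deriv /fps_zero mulr0 subr0.
Qed.

Lemma free_of_dform_alpha k j : free_of th (dform alpha k j).
Proof.
by move=> a a0; rewrite dform_alpha /dform !(free_of_deriv _ (free_of_gamma_form _)) ?subrr.
Qed.

Lemma dgamma_at0E :
  dgamma_at0 g = \matrix_(i, j) fps_at0 (dform alpha (x_idx i) (x_idx j)).
Proof. by apply/matrixP => i j; rewrite !mxE /fps_at0 dform_alpha /dform !gamma_form_lift. Qed.

Lemma double_gt0 : (0 < 2 * n)%N.
Proof. by rewrite muln_gt0. Qed.

Definition x1_ord : 'I_(2 * n) := Ordinal double_gt0.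

Lemma x1_idxE : x1 = x_idx x1_ord.
Proof. by apply: val_inj; rewrite /= inordK //; lia. Qed.

Lemma x1_neq_theta : x1 != th.
Proof. by rewrite x1_idxE eq_sym neq_lift. Qed.

Definition theta_exp k : mi (2 * n).+1 := [ffun i => (k * mi_unit th i)%N].

Lemma alpha_theta : (0 < m)%N ->
  alpha th = fun c => m%:R * monomial (theta_exp m.-1) c - monomial (mi_unit x1) c.
Proof.
move=> m_gt0; have x1_th := x1_neq_theta; apply: functional_extensionality => c.
rewrite /alpha_form gamma_form_theta /fps_add /fps_d /fps_deriv /h_fun /fps_add /fps_opp.
rewrite /fps_monomial /fps_zero addr0.
have -> : (mi_add c (mi_unit th) == theta_exp m) = (c == theta_exp m.-1).
  apply/eqP/eqP => [/ffunP E|->]; apply/ffunP => i; [have := E i|];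
  rewrite !ffunE; mi_lia.
have -> : (mi_add c (mi_unit th) == mi_add (mi_unit th) (mi_unit x1)) = (c == mi_unit x1).
  apply/eqP/eqP => [/ffunP E|->]; apply/ffunP => i; [have := E i|];
  rewrite !ffunE; mi_lia.
have [->|c_neq] := eqVneq c (theta_exp m.-1).
  have /negbTE -> : theta_exp m.-1 != mi_unit x1.
    by apply/eqP => /ffunP /(_ x1); rewrite /theta_exp !ffunE eqxx (negbTE x1_th) muln0.
  by rewrite /theta_exp !ffunE eqxx muln1 prednK //=; ring.
have [->|] := eqVneq c (mi_unit x1); last by rewrite subrr mulr0 mulr0 subrr.
by rewrite !ffunE eq_sym (negbTE x1_th) mulr0 mul1r add0r.
Qed.

Lemma alpha_lift i :
  alpha (x_idx i) = fun c => g i c - (x_idx i == x1)%:R * monomial (mi_unit th) c.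
Proof.
have x_th : x_idx i != th by rewrite eq_sym neq_lift.
apply: functional_extensionality => c.
rewrite /alpha_form gamma_form_lift /fps_add /fps_d /fps_deriv /h_fun /fps_add /fps_opp.
rewrite /fps_monomial.
have /negbTE -> : mi_add c (mi_unit (x_idx i)) != theta_exp m.
  by apply/eqP => /ffunP /(_ (x_idx i)); rewrite /theta_exp !ffunE eqxx (negbTE x_th); lia.
have -> : (mi_add c (mi_unit (x_idx i)) == mi_add (mi_unit th) (mi_unit x1)) =
          (x_idx i == x1) && (c == mi_unit th).
  have [<-|ne_x1] /= := eqVneq (x_idx i) x1.
    by apply/eqP/eqP => [/ffunP E|->]; apply/ffunP => j; [have := E j|];
       rewrite !ffunE; mi_lia.
  apply/eqP => /ffunP /(_ (x_idx i)).
  by rewrite !ffunE eqxx (negbTE x_th) (negbTE ne_x1); lia.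
have [->|] := eqVneq c (mi_unit th); last by move=> _; rewrite andbF /=; ring.
by rewrite andbT !ffunE (negbTE x_th); case: (_ == _) => /=; ring.
Qed.

Lemma contraction_alphaE (f : vfield K (2 * n).+1) (a : mi (2 * n).+1) :
  (0 < m)%N -> (forall i, free_of th (f (x_idx i))) -> (0 < a th)%N ->
  contraction f alpha a =
  m%:R * fps_mul (f th) (monomial (theta_exp m.-1)) a
  - fps_mul (f th) (monomial (mi_unit x1)) a - fps_mul (f x1) (monomial (mi_unit th)) a.
Proof.
move=> m_gt0 fx_free a_th.
rewrite /contraction big_ord_recl alpha_theta // fps_mulBr fps_mulZr; congr (_ + _).
rewrite (eq_bigr (fun i => if i == x1_ord then
                             - fps_mul (f x1) (monomial (mi_unit th)) a else 0)).
  by rewrite -big_mkcond big_pred1_eq.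
move=> i _; rewrite alpha_lift fps_mulBr fps_mulZr.
rewrite (fps_mul_free_of (fx_free i) (g_free i)) ?sub0r -?lt0n //.
rewrite x1_idxE (inj_eq (@lift_inj _ ord0)).
by case: eqP => [->|_]; rewrite ?mul1r ?mul0r ?oppr0.
Qed.

Lemma vfield_theta_eq0 (f : vfield K (2 * n).+1) :
  (2 < m)%N -> free_of th (contraction f alpha) -> (forall i, free_of th (f (x_idx i))) ->
  forall c, f th c = 0.
Proof.
move=> m_gt2 contr_free fx_free c; move Ek: (c x1) => k.
elim/ltn_ind: k c Ek => k IH c c_x1.
have m_gt0 : (0 < m)%N by lia.
have fx1_free : free_of th (f x1) by rewrite x1_idxE.
have x1_th := x1_neq_theta.
pose a := mi_add c (theta_exp m.-1).
have a_th : (1 < a th)%N by rewrite !ffunE eqxx; lia.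
have le_exp_a : mi_le (theta_exp m.-1) a by apply/forallP=> i; rewrite !ffunE leq_addl.
have a_sub : mi_sub a (theta_exp m.-1) = c by apply/ffunP=> i; rewrite !ffunE addnK.
have a_th0 : a th != 0%N by rewrite -lt0n ltnW.
have := contr_free a a_th0; rewrite contraction_alphaE //; last exact: ltnW.
rewrite !fps_mul_monomialr le_exp_a a_sub fx1_free ?if_same; last first.
  by rewrite !ffunE eqxx; lia.
have a_x1 : a x1 = c x1 by rewrite !ffunE (negbTE x1_th) muln0 addn0.
have -> : (if mi_le (mi_unit x1) a then f th (mi_sub a (mi_unit x1)) else 0) = 0.
  case: ifP => // /forallP /(_ x1); rewrite ffunE eqxx a_x1 => c_x1_gt0.
  apply: (IH (c x1).-1); first lia.
  by rewrite !ffunE eqxx (negbTE x1_th) muln0 addn0 subn1.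
by move/eqP; rewrite !subr0 mulf_eq0 pnatr_eq0 gtn_eqF // => /eqP.
Qed.

Lemma vfield_x1_eq0 (f : vfield K (2 * n).+1) :
  (0 < m)%N -> free_of th (contraction f alpha) -> (forall i, free_of th (f (x_idx i))) ->
  (forall c, f th c = 0) -> forall c, f x1 c = 0.
Proof.
move=> m_gt0 contr_free fx_free f_th0 c.
have [c_th|c_th] := eqVneq (c th) 0%N; last by rewrite x1_idxE fx_free.
pose a := mi_add c (mi_unit th).
have a_th : a th = 1%N by rewrite !ffunE eqxx c_th.
have le_th_a : mi_le (mi_unit th) a by apply/forallP=> i; rewrite !ffunE leq_addl.
have a_sub : mi_sub a (mi_unit th) = c by apply/ffunP=> i; rewrite !ffunE addnK.
have := contr_free a; rewrite a_th contraction_alphaE ?a_th //.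
rewrite !fps_mul_monomialr le_th_a a_sub.
by rewrite !f_th0 !if_same mulr0 subrr sub0r => /(_ isT)/eqP; rewrite oppr_eq0 => /eqP.
Qed.

End NormalForm.

Theorem lemma5p9 (K : numFieldType) (n m : nat) (hn : (0 < n)%N) (hm : (2 < m)%N)
  (g : 'I_(2 * n) -> fps K (2 * n).+1)
  (hg : forall i, indep_theta (g i))
  (hsymp : symplectic_dgamma g)
  (f : vfield K (2 * n).+1)
  (hL : lie_oneform f (alpha_form m g) = fun _ => @fps_zero K (2 * n).+1) :
  f (theta_idx n) = @fps_zero K (2 * n).+1 /\ f (x1_idx n) = @fps_zero K (2 * n).+1.
Proof.
have lie_eq0 j a : lie_oneform f (alpha_form m g) j a = 0 by rewrite hL.
have dform_0 := dform_alpha_theta m hg.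
have dform_free := free_of_dform_alpha m hg.
have contr_free := contraction_free_of lie_eq0 dform_0.
move: hsymp; rewrite /symplectic_dgamma (dgamma_at0E m).
move=> /(vfield_lift_free_of lie_eq0 dform_0 dform_free) fx_free.
have f_th0 := vfield_theta_eq0 hn hg hm contr_free fx_free.
split; apply: functional_extensionality => c; first exact: f_th0.
exact (vfield_x1_eq0 hn hg (ltnW (ltnW hm)) contr_free fx_free f_th0 c).
Qed.
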